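(* Let $n\ge1$ and $0\le j\le n$. Then \[ \sum_{m=1}^\infty\frac{e_j(m)h_{n-j}(m)}{m^2}=\begin{cases}(n+1)\zeta(n+2), & j=0,\\ \displaystyle\sum_{p=j}^n\binom{p-1}{j-1}S^T_{n+2,p}+\binom{n+1}{j+1}\zeta(n+2), & j\ge1.\end{cases} \]
   Context: For a symmetric function $u$ and $m\ge1$, $u(m)$ denotes $u$ evaluated at $x_r=1/r$ for $r\le m$ and $x_r=0$ for $r>m$; $e_j$, $h_i$ are the elementary and complete symmetric functions. Equivalently $e_j(m)=P_j(H_m,\dots,H_m^{(j)})$ and $h_i(m)=Q_i(H_m,\dots,H_m^{(i)})$ with $H_m^{(r)}=\sum_{t=1}^m t^{-r}$. Multiple zeta values: $\zeta(a_1,\dots,a_k)=\sum_{n_1>\cdots>n_k\ge1}n_1^{-a_1}\cdots n_k^{-a_k}$ for positive integers with $a_1\ge2$; weight is $a_1+\dots+a_k$, depth is $k$. For $N\ge2$ and $1\le k<N$, $S^T_{N,k}$ denotes the sum of all multiple zeta values $\zeta(a_1,\dots,a_k)$ of weight $N$ and depth $k$ with $a_1\ge3$. *)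

From Stdlib Require Import Reals List Arith ClassicalEpsilon.
Import ListNotations.
Open Scope R_scope.

Definition Rsum_list (l : list R) : R := fold_right Rplus 0 l.

(* e_j(m) = sum over m >= i_1 > i_2 > ... > i_j >= 1 of 1/(i_1 ... i_j),
   i.e. the elementary symmetric function e_j at x_r = 1/r (r <= m), 0 else. *)
Fixpoint e_sym (j m : nat) : R :=
  match j with
  | O => 1
  | S j' => Rsum_list (map (fun r => / INR r * e_sym j' (r - 1)) (seq 1 m))
  end.

(* h_i(m) = sum over m >= i_1 >= i_2 >= ... >= i_i >= 1 of 1/(i_1 ... i_i),
   the complete symmetric function h_i at x_r = 1/r (r <= m), 0 else. *)
Fixpoint h_sym (i m : nat) : R :=
  match i with
  | O => 1
  | S i' => Rsum_list (map (fun r => / INR r * h_sym i' r) (seq 1 m))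
  end.

(* Truncated multiple zeta sum:
   sum over N >= n_1 > n_2 > ... > n_k >= 1 of prod n_t^{-a_t}. *)
Fixpoint mzv_partial (a : list nat) (N : nat) : R :=
  match a with
  | [] => 1
  | a1 :: rest =>
      Rsum_list (map (fun n1 => / (INR n1 ^ a1) * mzv_partial rest (n1 - 1)) (seq 1 N))
  end.

(* zeta(a_1,...,a_k) = lim_{N -> oo} of the truncated sums
   (the limit exists when a_1 >= 2; value is unspecified otherwise). *)
Definition mzv (a : list nat) : R :=
  epsilon (inhabits 0) (fun l => Un_cv (mzv_partial a) l).

Fixpoint compositions (k N : nat) : list (list nat) :=
  match k with
  | O => match N with O => [[]] | S _ => [] end
  | S k' => flat_map (fun a => map (cons a) (compositions k' (N - a))) (seq 1 N)
  end.

Definition S_T (N k : nat) : R :=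
  Rsum_list (map mzv
    (filter (fun a => match a with a1 :: _ => Nat.leb 3 a1 | [] => false end)
            (compositions k N))).

(* Since e_j(m) = e_j(m-1) + e_{j-1}(m-1)/m, the series splits, with i = n - j, into
   sum_m e_j(m-1) h_i(m)/m^2 and sum_m e_{j-1}(m-1) h_i(m)/m^3.

   For the first one let A_j(m) = m! e_j(m) be the coefficient of t^j in (1+t)...(m+t) and
   G_i(l) the coefficient of s^i in prod_{r in l} 1/(r-s), so that G_i(1..m) = h_i(m)/m!.
   The term e_j(m-1) h_i(m)/m^2 is the sum over k >= 1 of A_j(m-1) G_i(k..k+m), which
   telescopes by partial fractions.  Summing the same nonnegative double series over m
   first, the column sums satisfy a Pascal-type recursion in (i, j) (the boundary terms
   vanish since e_j(m) h_i(m)/m -> 0) and equal binom(i+j+1, j+1)/k^(i+j+2); exchanging the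
   order of summation gives binom(i+j+1, j+1) zeta(i+j+2).

   The second series equals sum_p binom(p-1, j-1) S^T_{n+2,p} already at every truncation
   N: expanding h_i(m)/m^3 according to the multiplicity of the largest index, it becomes a
   sum of truncated MZVs whose first argument is >= 3, because
   sum_q binom(q, J) (sum of truncated MZVs of depth q and weight I+J) = e_J(N) h_I(N).
   The bound obtained for J = 0 also shows that these MZVs converge. *)

From Stdlib Require Import Reals List Arith Lia Lra ZArith ClassicalEpsilon.
Import ListNotations.
Open Scope R_scope.

Lemma cv_const (c : R) : Un_cv (fun _ => c) c.
Proof. intros e He; exists 0%nat; intros; unfold Rdist; rewrite Rminus_diag, Rabs_R0; lra. Qed.

Lemma cv_ext (u v : nat -> R) l : (forall n, u n = v n) -> Un_cv u l -> Un_cv v l.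
Proof. intros H Hu e He; destruct (Hu e He) as [N HN]; exists N; intros; rewrite <- H; auto. Qed.

Lemma cv_scal (u : nat -> R) l c : Un_cv u l -> Un_cv (fun n => c * u n) (c * l).
Proof. intros; apply CV_mult; auto; apply cv_const. Qed.

Lemma cv_shift (u : nat -> R) l : Un_cv u l -> Un_cv (fun n => u (S n)) l.
Proof. intros Hu e He; destruct (Hu e He) as [N HN]; exists N; intros; apply HN; lia. Qed.

Lemma cv_squeeze (u v w : nat -> R) l :
  (forall n, u n <= v n <= w n) -> Un_cv u l -> Un_cv w l -> Un_cv v l.
Proof.
  intros H Hu Hw e He. destruct (Hu e He) as [N1 H1]; destruct (Hw e He) as [N2 H2].
  exists (max N1 N2); intros n Hn. specialize (H1 n ltac:(lia)); specialize (H2 n ltac:(lia)).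
  specialize (H n). unfold Rdist in *. apply Rabs_def2 in H1; apply Rabs_def2 in H2.
  apply Rabs_def1; lra.
Qed.

Lemma cv_squeeze0 (v w : nat -> R) : (forall n, 0 <= v n <= w n) -> Un_cv w 0 -> Un_cv v 0.
Proof. intros H Hw. apply (cv_squeeze (fun _ => 0) v w); auto. apply cv_const. Qed.

Lemma cv_le (u v : nat -> R) l1 l2 :
  (forall n, u n <= v n) -> Un_cv u l1 -> Un_cv v l2 -> l1 <= l2.
Proof.
  intros H Hu Hv. destruct (Rle_or_lt l1 l2) as [|Hlt]; auto.
  set (e := (l1 - l2) / 2). assert (He : e > 0) by (unfold e; lra).
  destruct (Hu e He) as [N1 H1]; destruct (Hv e He) as [N2 H2].
  specialize (H1 (max N1 N2) ltac:(lia)); specialize (H2 (max N1 N2) ltac:(lia)).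
  specialize (H (max N1 N2)). unfold Rdist in *. apply Rabs_def2 in H1; apply Rabs_def2 in H2.
  unfold e in *; lra.
Qed.

Lemma cv_le_const (u : nat -> R) l c : (forall n, u n <= c) -> Un_cv u l -> l <= c.
Proof. intros; eapply (cv_le u (fun _ => c)); eauto; apply cv_const. Qed.

Lemma cv_ge_const (u : nat -> R) l c : (forall n, c <= u n) -> Un_cv u l -> c <= l.
Proof. intros; eapply (cv_le (fun _ => c) u); eauto; apply cv_const. Qed.

Lemma cv_growing_bounded (u : nat -> R) c :
  (forall n, u n <= u (S n)) -> (forall n, u n <= c) -> exists l, Un_cv u l /\ l <= c.
Proof.
  intros Hg Hb. destruct (growing_cv u) as [l Hl].
  - intro n; apply Hg.
  - exists c; intros x [n ->]; apply Hb.
  - exists l; split; auto; eapply cv_le_const; eauto.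
Qed.

Lemma INR_S_pos m : 0 < INR (S m).
Proof. apply lt_0_INR; lia. Qed.

Lemma INR_S_neq0 m : INR (S m) <> 0.
Proof. pose proof (INR_S_pos m); lra. Qed.

Lemma cv_div_INR_S c : Un_cv (fun n => c / INR (S n)) 0.
Proof.
  replace 0 with (c * 0) by ring. apply cv_scal. intros e He.
  destruct (archimed (/ e)) as [Hup _].
  assert (Hz : (0 <= up (/ e))%Z).
  { apply le_IZR. pose proof (Rinv_0_lt_compat e He). simpl; lra. }
  exists (Z.to_nat (up (/ e))). intros n Hn. unfold Rdist. rewrite Rminus_0_r.
  pose proof (INR_S_pos n) as Hn0.
  rewrite Rabs_pos_eq by (left; apply Rinv_0_lt_compat; auto).
  assert (Hle : INR (Z.to_nat (up (/ e))) <= INR n) by (apply le_INR; lia).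
  rewrite INR_IZR_INZ, Z2Nat.id in Hle by auto.
  rewrite <- (Rinv_inv e). apply Rinv_lt_contravar.
  - apply Rmult_lt_0_compat; [apply Rinv_0_lt_compat|]; lra.
  - rewrite S_INR; lra.
Qed.

(* A bound [z n <= sqrt (K / n)], stated without square roots. *)
Lemma cv_0_of_sq_bound (z : nat -> R) K :
  (forall n, 0 <= z n) -> (forall n, z n ^ 2 <= K / INR (S n)) -> Un_cv z 0.
Proof.
  intros Hz Hb e He. destruct (cv_div_INR_S K (e * e) ltac:(nra)) as [N HN].
  exists N; intros n Hn. specialize (HN n Hn). unfold Rdist in *. rewrite Rminus_0_r in *.
  specialize (Hb n); specialize (Hz n). rewrite Rabs_pos_eq by auto.
  apply Rabs_def2 in HN. cbn [pow] in Hb. destruct (Rlt_or_le (z n) e); auto. nra.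
Qed.

Definition sumR (f : nat -> R) (a n : nat) : R := Rsum_list (map f (seq a n)).

Lemma Rsum_list_cons x l : Rsum_list (x :: l) = x + Rsum_list l.
Proof. reflexivity. Qed.

Lemma Rsum_list_app l1 l2 : Rsum_list (l1 ++ l2) = Rsum_list l1 + Rsum_list l2.
Proof. induction l1; simpl; [lra|]. unfold Rsum_list in *; simpl; rewrite IHl1; lra. Qed.

Lemma Rsum_list_map_ext {A} (l : list A) f g : (forall x, In x l -> f x = g x) ->
  Rsum_list (map f l) = Rsum_list (map g l).
Proof.
  intros H; induction l; cbn [map]; auto.
  rewrite !Rsum_list_cons, H, IHl; [|intros; apply H|]; simpl; auto.
Qed.

Lemma Rsum_list_map_plus {A} (l : list A) f g :
  Rsum_list (map (fun x => f x + g x) l) = Rsum_list (map f l) + Rsum_list (map g l).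
Proof. induction l; cbn [map]; [unfold Rsum_list; simpl; lra|]. rewrite !Rsum_list_cons, IHl; lra. Qed.

Lemma Rsum_list_map_scal {A} (l : list A) c f :
  Rsum_list (map (fun x => c * f x) l) = c * Rsum_list (map f l).
Proof. induction l; cbn [map]; [unfold Rsum_list; simpl; lra|]. rewrite !Rsum_list_cons, IHl; lra. Qed.

Lemma Rsum_list_map_zero {A} (l : list A) : Rsum_list (map (fun _ => 0) l) = 0.
Proof. induction l; cbn [map]; auto. rewrite Rsum_list_cons, IHl; ring. Qed.

Lemma Rsum_list_flat_map {A B} (l : list A) (g : A -> list B) (f : B -> R) :
  Rsum_list (map f (flat_map g l)) = Rsum_list (map (fun x => Rsum_list (map f (g x))) l).
Proof.
  induction l; cbn [map flat_map]; auto. rewrite map_app, Rsum_list_app, Rsum_list_cons, IHl; auto.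
Qed.

Lemma Rsum_list_nonneg {A} (l : list A) f : (forall x, 0 <= f x) -> 0 <= Rsum_list (map f l).
Proof.
  intros H; induction l; cbn [map]; [unfold Rsum_list; simpl; lra|].
  rewrite Rsum_list_cons; specialize (H a); lra.
Qed.

Lemma Rsum_list_map_ge_term {A} (l : list A) g x :
  (forall y, 0 <= g y) -> In x l -> g x <= Rsum_list (map g l).
Proof.
  intros Hg; induction l as [|y l IH]; intros Hx; [destruct Hx|]. cbn [map]. rewrite Rsum_list_cons.
  destruct Hx as [<-|Hx]. { pose proof (Rsum_list_nonneg l g Hg); lra. }
  specialize (IH Hx); specialize (Hg y); lra.
Qed.

Lemma cv_Rsum_list {A} (l : list A) (F : nat -> A -> R) (L : A -> R) :
  (forall x, In x l -> Un_cv (fun N => F N x) (L x)) ->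
  Un_cv (fun N => Rsum_list (map (F N) l)) (Rsum_list (map L l)).
Proof.
  induction l; intros H; cbn [map]. { unfold Rsum_list; simpl; apply cv_const. }
  eapply cv_ext. { intro N; symmetry; apply Rsum_list_cons. } rewrite Rsum_list_cons.
  apply CV_plus; [apply H; simpl; auto|apply IHl; intros; apply H; simpl; auto].
Qed.

Lemma sumR_0 f a : sumR f a 0 = 0.
Proof. reflexivity. Qed.

Lemma sumR_Sl f a n : sumR f a (S n) = f a + sumR f (S a) n.
Proof. reflexivity. Qed.

Lemma sumR_S f a n : sumR f a (S n) = sumR f a n + f (a + n)%nat.
Proof. unfold sumR; rewrite seq_S, map_app, Rsum_list_app; simpl; unfold Rsum_list; simpl; lra. Qed.

Lemma sumR_shift f a n : sumR f (S a) n = sumR (fun k => f (S k)) a n.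
Proof. revert a; induction n; intros; [reflexivity|]. rewrite !sumR_Sl, IHn; reflexivity. Qed.

Lemma sumR_ext f g a n :
  (forall k, (a <= k < a + n)%nat -> f k = g k) -> sumR f a n = sumR g a n.
Proof.
  revert a; induction n; intros a H; [reflexivity|]. rewrite !sumR_Sl, (H a) by lia.
  rewrite IHn; auto; intros; apply H; lia.
Qed.

Lemma sumR_zero a n : sumR (fun _ => 0) a n = 0.
Proof. apply Rsum_list_map_zero. Qed.

Lemma sumR_mul0r f a n : sumR (fun k => f k * 0) a n = 0.
Proof. rewrite (sumR_ext _ (fun _ => 0)) by (intros; ring). apply sumR_zero. Qed.

Lemma sumR_mul0l f a n : sumR (fun k => 0 * f k) a n = 0.
Proof. rewrite (sumR_ext _ (fun _ => 0)) by (intros; ring). apply sumR_zero. Qed.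

Lemma sumR_plus f g a n : sumR (fun k => f k + g k) a n = sumR f a n + sumR g a n.
Proof. apply Rsum_list_map_plus. Qed.

Lemma sumR_scal c f a n : sumR (fun k => c * f k) a n = c * sumR f a n.
Proof. apply Rsum_list_map_scal. Qed.

Lemma sumR_nonneg f a n : (forall k, (a <= k)%nat -> 0 <= f k) -> 0 <= sumR f a n.
Proof.
  intros H; revert a H; induction n; intros a H; [unfold sumR; simpl; lra|].
  rewrite sumR_Sl. pose proof (H a (le_n a)). pose proof (IHn (S a) ltac:(intros; apply H; lia)). lra.
Qed.

Lemma sumR_le f g a n :
  (forall k, (a <= k < a + n)%nat -> f k <= g k) -> sumR f a n <= sumR g a n.
Proof.
  intros H; revert a H; induction n; intros a H; [unfold sumR; simpl; lra|].
  rewrite !sumR_Sl. pose proof (H a ltac:(lia)).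
  pose proof (IHn (S a) ltac:(intros; apply H; lia)). lra.
Qed.

Lemma sumR_ge_term f a n k : (forall x, 0 <= f x) -> (a <= k < a + n)%nat -> f k <= sumR f a n.
Proof. intros Hf Hk. apply Rsum_list_map_ge_term; auto. apply in_seq; lia. Qed.

Lemma sumR_split f a n m : sumR f a (n + m) = sumR f a n + sumR f (a + n) m.
Proof.
  unfold sumR. rewrite seq_app, map_app, Rsum_list_app. reflexivity.
Qed.

Lemma sumR_zero_tail f a n m :
  (forall k, (a + n <= k < a + n + m)%nat -> f k = 0) -> sumR f a (n + m) = sumR f a n.
Proof.
  intros H. rewrite sumR_split, (sumR_ext f (fun _ => 0) (a + n) m), sumR_zero; [ring|].
  intros; apply H; lia.
Qed.

Lemma sumR_zero_head f a n m :
  (forall k, (a <= k < a + n)%nat -> f k = 0) -> sumR f a (n + m) = sumR f (a + n) m.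
Proof.
  intros H. rewrite sumR_split, (sumR_ext f (fun _ => 0) a n), sumR_zero; [ring|].
  intros; apply H; lia.
Qed.

Lemma sumR_swap (f : nat -> nat -> R) a n b m :
  sumR (fun x => sumR (fun y => f x y) b m) a n = sumR (fun y => sumR (fun x => f x y) a n) b m.
Proof.
  revert a; induction n; intros a.
  - rewrite sumR_0. symmetry; apply sumR_zero.
  - rewrite sumR_Sl, IHn, <- sumR_plus. apply sumR_ext; intros. rewrite sumR_Sl; lra.
Qed.

Lemma sumR_telescope f a n : sumR (fun k => f k - f (S k)) a n = f a - f (a + n)%nat.
Proof.
  induction n. { rewrite sumR_0, Nat.add_0_r; lra. }
  rewrite sumR_S, IHn. replace (a + S n)%nat with (S (a + n)) by lia. lra.
Qed.

Lemma sum_f_R0_sumR f n : sum_f_R0 f n = sumR f 0 (S n).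
Proof.
  induction n; simpl. { unfold sumR; simpl; unfold Rsum_list; simpl; lra. }
  rewrite IHn, (sumR_S f 0 (S n)); simpl; lra.
Qed.

Lemma cv_sumR (F : nat -> nat -> R) (L : nat -> R) a n :
  (forall k, (a <= k < a + n)%nat -> Un_cv (fun N => F N k) (L k)) ->
  Un_cv (fun N => sumR (F N) a n) (sumR L a n).
Proof.
  intros H. apply cv_Rsum_list. intros k Hk. apply H. apply in_seq in Hk; lia.
Qed.

Lemma sumR_le_lim (u : nat -> R) a L N :
  (forall n, (a <= n)%nat -> 0 <= u n) -> Un_cv (fun M => sumR u a M) L -> sumR u a N <= L.
Proof.
  intros Hu Hc. apply cv_ge_const with (u := fun n => sumR u a (N + n)).
  - intros n. rewrite sumR_split.
    pose proof (sumR_nonneg u (a + N) n ltac:(intros; apply Hu; lia)). lra.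
  - intros e He. destruct (Hc e He) as [N0 HN]. exists N0. intros n Hn. apply HN. lia.
Qed.

(* Tonelli for nonnegative double series indexed from 1. *)
Lemma series_swap (f : nat -> nat -> R) (g h : nat -> R) L :
  (forall m k, (1 <= m)%nat -> (1 <= k)%nat -> 0 <= f m k) ->
  (forall m, (1 <= m)%nat -> Un_cv (fun K => sumR (f m) 1 K) (g m)) ->
  (forall k, (1 <= k)%nat -> Un_cv (fun M => sumR (fun m => f m k) 1 M) (h k)) ->
  Un_cv (fun K => sumR h 1 K) L ->
  Un_cv (fun M => sumR g 1 M) L.
Proof.
  intros Hf Hg Hh HS.
  assert (Hg0 : forall m, (1 <= m)%nat -> 0 <= g m).
  { intros m Hm.
    exact (cv_ge_const _ _ 0 (fun K => sumR_nonneg _ 1 K (fun k Hk => Hf m k Hm Hk)) (Hg m Hm)). }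
  assert (Hh0 : forall k, (1 <= k)%nat -> 0 <= h k).
  { intros k Hk.
    exact (cv_ge_const _ _ 0 (fun M => sumR_nonneg _ 1 M (fun m Hm => Hf m k Hm Hk)) (Hh k Hk)). }
  assert (Hrows : forall M, sumR g 1 M <= L).
  { intros M. apply (cv_le_const (fun K => sumR (fun m => sumR (f m) 1 K) 1 M)).
    - intros K. rewrite sumR_swap. apply Rle_trans with (sumR h 1 K).
      + apply sumR_le. intros k Hk. apply sumR_le_lim; [intros; apply Hf; lia|apply Hh; lia].
      + apply sumR_le_lim; auto.
    - apply cv_sumR; intros; apply Hg; lia. }
  destruct (cv_growing_bounded (fun M => sumR g 1 M) L) as [l [Hl HlS]]; auto.
  { intros n. rewrite sumR_S. pose proof (Hg0 (1 + n)%nat ltac:(lia)); lra. }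
  replace L with l; auto. apply Rle_antisym; auto.
  apply (cv_le_const (fun K => sumR h 1 K)); auto.
  intros K. apply (cv_le_const (fun M => sumR (fun k => sumR (fun m => f m k) 1 M) 1 K)).
  - intros M. rewrite <- sumR_swap. apply Rle_trans with (sumR g 1 M).
    + apply sumR_le. intros m Hm. apply sumR_le_lim; [intros; apply Hf; lia|apply Hg; lia].
    + apply sumR_le_lim; auto.
  - apply cv_sumR; intros; apply Hh; lia.
Qed.

(** * The symmetric functions [e_j(m)] and [h_i(m)] *)

Lemma e_sym_S j m : e_sym (S j) (S m) = e_sym (S j) m + / INR (S m) * e_sym j m.
Proof.
  change (sumR (fun r => / INR r * e_sym j (r - 1)) 1 (S m) =
          sumR (fun r => / INR r * e_sym j (r - 1)) 1 m + / INR (S m) * e_sym j m).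
  rewrite sumR_S. simpl (1 + m)%nat. replace (S m - 1)%nat with m by lia. reflexivity.
Qed.

Lemma h_sym_S i m : h_sym (S i) (S m) = h_sym (S i) m + / INR (S m) * h_sym i (S m).
Proof.
  change (sumR (fun r => / INR r * h_sym i r) 1 (S m) =
          sumR (fun r => / INR r * h_sym i r) 1 m + / INR (S m) * h_sym i (S m)).
  apply sumR_S.
Qed.

Lemma inv_INR_nonneg r : 0 <= / INR r.
Proof. destruct r; [simpl; rewrite Rinv_0; lra|]. left; apply Rinv_0_lt_compat, INR_S_pos. Qed.

Lemma e_sym_nonneg j m : 0 <= e_sym j m.
Proof.
  revert m; induction j; intros m; simpl; [lra|].
  apply Rsum_list_nonneg; intros r. apply Rmult_le_pos; auto using inv_INR_nonneg.
Qed.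

Lemma h_sym_nonneg i m : 0 <= h_sym i m.
Proof.
  revert m; induction i; intros m; simpl; [lra|].
  apply Rsum_list_nonneg; intros r. apply Rmult_le_pos; auto using inv_INR_nonneg.
Qed.

Lemma sumR_inv_pow_S x f a n :
  sumR (fun k => / (x ^ S k) * f k) a n = / x * sumR (fun k => / (x ^ k) * f k) a n.
Proof.
  rewrite <- sumR_scal. apply sumR_ext. intros. destruct (Req_dec x 0) as [->|Hx].
  - rewrite pow_i, Rinv_0 by lia. ring.
  - simpl pow. rewrite Rinv_mult. ring.
Qed.

(* Splitting off the occurrences of the largest index [N+1] in [h_I(N+1)]. *)
Lemma h_sym_S_expand I N :
  h_sym I (S N) = h_sym I N + sumR (fun a => / (INR (S N) ^ a) * h_sym (I - a) N) 1 I.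
Proof.
  induction I.
  - simpl. unfold sumR; simpl. unfold Rsum_list; simpl. ring.
  - rewrite h_sym_S, IHI, (sumR_Sl _ 1 I), (sumR_shift _ 1 I).
    change (fun k => / INR (S N) ^ S k * h_sym (S I - S k) N)
      with (fun k => / INR (S N) ^ S k * h_sym (I - k) N).
    rewrite sumR_inv_pow_S. replace (S I - 1)%nat with I by lia. rewrite pow_1. ring.
Qed.

(** * Growth of the harmonic numbers *)

Definition harmonic (m : nat) : R := e_sym 1 m.

Lemma harmonic_S m : harmonic (S m) = harmonic m + / INR (S m).
Proof. unfold harmonic; rewrite e_sym_S; simpl e_sym; ring. Qed.

Lemma harmonic_nonneg m : 0 <= harmonic m.
Proof. apply e_sym_nonneg. Qed.

Lemma harmonic_le_S m : harmonic m <= harmonic (S m).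
Proof. rewrite harmonic_S. pose proof (Rinv_0_lt_compat _ (INR_S_pos m)); lra. Qed.

Lemma pow_le_mono x y n : 0 <= x <= y -> x ^ n <= y ^ n.
Proof. intros; apply pow_incr; auto. Qed.

Lemma e_sym_le_harmonic_pow j m : e_sym j m <= harmonic m ^ j.
Proof.
  revert j; induction m; intros j.
  - destruct j; simpl; [lra|]. rewrite Rmult_0_l. lra.
  - destruct j; [simpl; lra|]. rewrite e_sym_S, harmonic_S.
    pose proof (Rinv_0_lt_compat _ (INR_S_pos m)).
    pose proof (IHm (S j)); pose proof (IHm j). pose proof (e_sym_nonneg j m).
    pose proof (harmonic_nonneg m). pose proof (pow_le (harmonic m) j (harmonic_nonneg m)).
    assert (harmonic m ^ j <= (harmonic m + / INR (S m)) ^ j) by (apply pow_le_mono; lra).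
    cbn [pow] in *. nra.
Qed.

Lemma h_sym_le_harmonic_pow i m : h_sym i m <= harmonic m ^ i.
Proof.
  revert i; induction m; intros i.
  - destruct i; simpl; [lra|]. rewrite Rmult_0_l. lra.
  - induction i; [simpl; lra|]. rewrite h_sym_S.
    pose proof (Rinv_0_lt_compat _ (INR_S_pos m)). pose proof (IHm (S i)).
    assert (harmonic m ^ i <= harmonic (S m) ^ i)
      by (apply pow_le_mono; split; [apply harmonic_nonneg|apply harmonic_le_S]).
    pose proof (harmonic_nonneg m). pose proof (h_sym_nonneg i (S m)).
    pose proof (pow_le (harmonic m) i (harmonic_nonneg m)).
    cbn [pow] in *. rewrite (harmonic_S m) at 1. nra.
Qed.

Lemma ln_le x y : 0 < x -> x <= y -> ln x <= ln y.
Proof. intros Hx [Hl| ->]; [left; apply ln_increasing; auto|lra]. Qed.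

Lemma harmonic_le_1_ln m : (1 <= m)%nat -> harmonic m <= 1 + ln (INR m).
Proof.
  intros Hm. induction m as [|m IH]; [lia|]. destruct m.
  - unfold harmonic. simpl. rewrite ln_1. unfold Rsum_list; simpl. lra.
  - rewrite harmonic_S. specialize (IH ltac:(lia)).
    (* [1 - 1/(m+1) <= exp (-1/(m+1))] gives [1/(m+1) <= ln (m+1) - ln m]. *)
    assert (Hm0 : 0 < INR (S m)) by apply INR_S_pos. pose proof (INR_S_pos (S m)).
    assert (E : 1 + - / INR (S (S m)) <= exp (- / INR (S (S m)))) by apply exp_ineq1_le.
    replace (1 + - / INR (S (S m))) with (INR (S m) / INR (S (S m))) in E
      by (rewrite (S_INR (S m)); field; lra).
    apply ln_le in E; [|apply Rdiv_lt_0_compat; lra].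
    rewrite ln_exp in E. unfold Rdiv in E. rewrite ln_mult, ln_Rinv in E
      by (try apply Rinv_0_lt_compat; lra).
    lra.
Qed.

Lemma exp_pow x n : exp x ^ n = exp (INR n * x).
Proof.
  induction n; simpl. { rewrite Rmult_0_l, exp_0; auto. }
  rewrite IHn, <- exp_plus. f_equal. destruct n; simpl; ring.
Qed.

(* With [d = 2(c+1)] and [y = 1 + ln x / d]: [1 + ln x <= d y] and [y ^ (2(c+1)) <= exp (ln x) = x]. *)
Lemma one_plus_ln_pow_sq_le c x : 1 <= x ->
  ((1 + ln x) ^ c) ^ 2 <= INR (2 * S c) ^ (2 * c) * x.
Proof.
  intros Hx. set (d := INR (2 * S c)). set (L := ln x).
  assert (Hd : 1 <= d) by (unfold d; apply (le_INR 1); lia).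
  assert (HL : 0 <= L) by (unfold L; rewrite <- ln_1; apply ln_le; lra).
  set (y := 1 + L / d).
  assert (Hy : 1 <= y) by (unfold y; pose proof (Rle_mult_inv_pos L d HL ltac:(lra)); unfold Rdiv; lra).
  assert (Hyx : y ^ (2 * S c) <= x).
  { eapply Rle_trans. { apply pow_le_mono. split; [lra|]. apply exp_ineq1_le. }
    rewrite exp_pow. fold d. replace (d * (L / d)) with L by (field; lra).
    unfold L; rewrite exp_ln; lra. }
  assert (Hle : (1 + L) ^ c <= (d * y) ^ c).
  { apply pow_le_mono. unfold y. split; [lra|].
    replace (d * (1 + L / d)) with (d + L) by (field; lra). lra. }
  eapply Rle_trans. { apply pow_le_mono. split; [apply pow_le; lra|exact Hle]. }
  rewrite !Rpow_mult_distr, <- !pow_mult, (Nat.mul_comm c 2).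
  apply Rmult_le_compat_l; [apply pow_le; lra|].
  eapply Rle_trans; [|exact Hyx]. apply Rle_pow; [lra|lia].
Qed.

Lemma harmonic_pow_div_cv c : Un_cv (fun n => harmonic (S n) ^ c / INR (S n)) 0.
Proof.
  apply (cv_0_of_sq_bound _ (INR (2 * S c) ^ (2 * c))).
  - intros n. apply Rle_mult_inv_pos; [apply pow_le, harmonic_nonneg|apply INR_S_pos].
  - intros n. pose proof (INR_S_pos n) as HN.
    assert (HH : (harmonic (S n) ^ c) ^ 2 <= INR (2 * S c) ^ (2 * c) * INR (S n)).
    { eapply Rle_trans; [|apply one_plus_ln_pow_sq_le; apply (le_INR 1); lia].
      apply pow_le_mono. split; [apply pow_le, harmonic_nonneg|].
      apply pow_le_mono. split; [apply harmonic_nonneg|apply harmonic_le_1_ln; lia]. }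
    replace ((harmonic (S n) ^ c / INR (S n)) ^ 2)
      with ((harmonic (S n) ^ c) ^ 2 / INR (S n) * / INR (S n)) by (field; lra).
    replace (INR (2 * S c) ^ (2 * c) / INR (S n))
      with (INR (2 * S c) ^ (2 * c) * INR (S n) / INR (S n) * / INR (S n)) by (field; lra).
    apply Rmult_le_compat_r; [left; apply Rinv_0_lt_compat; lra|].
    apply Rmult_le_compat_r; [left; apply Rinv_0_lt_compat; lra|exact HH].
Qed.

(** * Truncated multiple zeta values *)

Lemma mzv_partial_S c b N :
  mzv_partial (c :: b) (S N) = mzv_partial (c :: b) N + / (INR (S N) ^ c) * mzv_partial b N.
Proof.
  change (sumR (fun n1 => / (INR n1 ^ c) * mzv_partial b (n1 - 1)) 1 (S N) =
          sumR (fun n1 => / (INR n1 ^ c) * mzv_partial b (n1 - 1)) 1 N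
          + / (INR (S N) ^ c) * mzv_partial b N).
  rewrite sumR_S. simpl (1 + N)%nat. replace (S N - 1)%nat with N by lia. reflexivity.
Qed.

Lemma inv_INR_pow_nonneg r c : 0 <= / (INR r ^ c).
Proof.
  destruct r; [destruct c; simpl; [lra|rewrite Rmult_0_l, Rinv_0; lra]|].
  left; apply Rinv_0_lt_compat, pow_lt, INR_S_pos.
Qed.

Lemma mzv_partial_nonneg a N : 0 <= mzv_partial a N.
Proof.
  revert N; induction a; intros N; simpl; [lra|].
  apply Rsum_list_nonneg; intros r. apply Rmult_le_pos; auto using inv_INR_pow_nonneg.
Qed.

Lemma mzv_partial_le_S a N : mzv_partial a N <= mzv_partial a (S N).
Proof.
  destruct a as [|c b]; [simpl; lra|]. rewrite mzv_partial_S.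
  pose proof (Rmult_le_pos _ _ (inv_INR_pow_nonneg (S N) c) (mzv_partial_nonneg b N)). lra.
Qed.

Lemma mzv_of_cv a l : Un_cv (mzv_partial a) l -> mzv a = l.
Proof.
  intros H. unfold mzv. assert (E : exists x, Un_cv (mzv_partial a) x) by eauto.
  pose proof (epsilon_spec (inhabits 0) _ E). eapply UL_sequence; eauto.
Qed.

Lemma mzv_partial_single w N : mzv_partial [w] N = sumR (fun k => / INR k ^ w) 1 N.
Proof.
  change (sumR (fun n1 => / (INR n1 ^ w) * 1) 1 N = sumR (fun k => / INR k ^ w) 1 N).
  apply sumR_ext; intros; ring.
Qed.

(* Comparison with the telescoping sum of [1/k - 1/(k+1)]. *)
Lemma sum_inv_sq_le N : sumR (fun k => / INR k ^ 2) 1 (S N) <= 2 - / INR (S N).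
Proof.
  induction N. { unfold sumR; simpl; unfold Rsum_list; simpl. lra. }
  rewrite sumR_S. replace (1 + S N)%nat with (S (S N)) by lia.
  enough (/ INR (S (S N)) ^ 2 <= / INR (S N) - / INR (S (S N))) by lra.
  rewrite (S_INR (S N)). set (x := INR (S N)). assert (0 < x) by apply INR_S_pos.
  replace (/ x - / (x + 1)) with (/ (x * (x + 1))) by (field; lra).
  apply Rinv_le_contravar; [apply Rmult_lt_0_compat; lra|]. simpl; nra.
Qed.

Lemma zeta_partial_cv w : (2 <= w)%nat -> exists z, Un_cv (mzv_partial [w]) z.
Proof.
  intros Hw. destruct (cv_growing_bounded (fun N => sumR (fun k => / INR k ^ w) 1 N) 2) as [z [Hz _]].
  - intros n. rewrite sumR_S. pose proof (inv_INR_pow_nonneg (1 + n) w). lra.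
  - intros N. apply Rle_trans with (sumR (fun k => / INR k ^ 2) 1 (S N)).
    + rewrite sumR_S. pose proof (inv_INR_pow_nonneg (1 + N) 2).
      enough (sumR (fun k => / INR k ^ w) 1 N <= sumR (fun k => / INR k ^ 2) 1 N) by lra.
      apply sumR_le. intros k Hk. apply Rinv_le_contravar; [apply pow_lt, lt_0_INR; lia|].
      apply Rle_pow; [apply (le_INR 1); lia|auto].
    + pose proof (sum_inv_sq_le N). pose proof (Rinv_0_lt_compat _ (INR_S_pos N)). lra.
  - exists z. eapply cv_ext; [|apply Hz]. intros; symmetry; apply mzv_partial_single.
Qed.

(** * Partial-fraction coefficients *)

(* Coefficient of [t^j] in [(1+t)(2+t)...(m+t)]. *)
Fixpoint rising_coef (j m : nat) : R :=
  match m with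
  | O => match j with O => 1 | _ => 0 end
  | S m' => INR (S m') * rising_coef j m' + match j with O => 0 | S j' => rising_coef j' m' end
  end.

Lemma rising_coef_e_sym j m : rising_coef j m = INR (fact m) * e_sym j m.
Proof.
  revert j; induction m; intros j.
  - destruct j; simpl; lra.
  - change (fact (S m)) with (S m * fact m)%nat. rewrite mult_INR. destruct j.
    + cbn [rising_coef]. rewrite IHm. cbn [e_sym]; ring.
    + cbn [rising_coef]. rewrite !IHm, e_sym_S. field. apply INR_S_neq0.
Qed.

Lemma rising_coef_nonneg j m : 0 <= rising_coef j m.
Proof. rewrite rising_coef_e_sym. apply Rmult_le_pos; [apply pos_INR|apply e_sym_nonneg]. Qed.

(* Coefficient of [s^i] in [prod_(r in l) 1/(r - s)], computed from [r F_(r::l) = F_l + s F_(r::l)]. *)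
Fixpoint invprod_coef (i : nat) : list nat -> R :=
  match i with
  | O => fix go l := match l with [] => 1 | r :: l' => go l' / INR r end
  | S i' => fix go l :=
      match l with [] => 0 | r :: l' => (go l' + invprod_coef i' (r :: l')) / INR r end
  end.

Definition invprod_coef_pred (i : nat) (l : list nat) : R :=
  match i with O => 0 | S i' => invprod_coef i' l end.

Lemma invprod_coef_cons i r l :
  INR r <> 0 -> INR r * invprod_coef i (r :: l) = invprod_coef i l + invprod_coef_pred i (r :: l).
Proof. intros H; destruct i; simpl; field; auto. Qed.

Lemma INR_neq0 r : (0 < r)%nat -> INR r <> 0.
Proof. intros; apply not_0_INR; lia. Qed.

(* The same recursion holds at the last factor, as the product does not depend on the order. *)
Lemma invprod_coef_snoc i l r : Forall (lt 0) l -> (0 < r)%nat ->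
  INR r * invprod_coef i (l ++ [r]) = invprod_coef i l + invprod_coef_pred i (l ++ [r]).
Proof.
  intros Hl Hr. revert i. induction l as [|x l IH]; intros i.
  - apply invprod_coef_cons, INR_neq0; auto.
  - inversion Hl as [|? ? Hx Hl']; subst. specialize (IH Hl').
    pose proof (INR_neq0 x Hx) as Hx0. cbn [app] in *.
    induction i as [|i IHi].
    + change (invprod_coef 0 (x :: l ++ [r])) with (invprod_coef 0 (l ++ [r]) / INR x).
      change (invprod_coef 0 (x :: l)) with (invprod_coef 0 l / INR x). specialize (IH 0%nat).
      cbn [invprod_coef_pred] in *. unfold Rdiv. rewrite <- Rmult_assoc, IH. ring.
    + change (invprod_coef (S i) (x :: l ++ [r]))
        with ((invprod_coef (S i) (l ++ [r]) + invprod_coef i (x :: l ++ [r])) / INR x).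
      change (invprod_coef (S i) (x :: l))
        with ((invprod_coef (S i) l + invprod_coef i (x :: l)) / INR x).
      cbn [invprod_coef_pred] in *.
      pose proof (IH (S i)) as E1. pose proof (invprod_coef_cons i x (l ++ [r]) Hx0) as E2.
      cbn [invprod_coef_pred] in E1.
      apply (Rmult_eq_reg_l (INR x)); auto.
      replace (INR x * (INR r * ((invprod_coef (S i) (l ++ [r])
                                  + invprod_coef i (x :: l ++ [r])) / INR x)))
        with (INR r * invprod_coef (S i) (l ++ [r]) + INR r * invprod_coef i (x :: l ++ [r]))
        by (field; auto).
      rewrite E1, IHi.
      replace (INR x * ((invprod_coef (S i) l + invprod_coef i (x :: l)) / INR x
                        + invprod_coef i (x :: l ++ [r])))
        with (invprod_coef (S i) l + invprod_coef i (x :: l) + INR x * invprod_coef i (x :: l ++ [r]))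
        by (field; auto).
      rewrite E2. ring.
Qed.

Lemma Forall_lt0_seq k m : (0 < k)%nat -> Forall (lt 0) (seq k m).
Proof. intros Hk; apply Forall_forall; intros x Hx; apply in_seq in Hx; unfold lt; lia. Qed.

Lemma invprod_coef_nonneg i l : 0 <= invprod_coef i l.
Proof.
  revert i; induction l as [|x l IH]; intros i.
  - destruct i; simpl; lra.
  - pose proof (inv_INR_nonneg x). induction i.
    + change (0 <= invprod_coef 0 l / INR x). apply Rmult_le_pos; auto.
    + change (0 <= (invprod_coef (S i) l + invprod_coef i (x :: l)) / INR x).
      apply Rmult_le_pos; auto. pose proof (IH (S i)); lra.
Qed.

Lemma invprod_coef_h_sym i m : invprod_coef i (seq 1 m) = h_sym i m / INR (fact m).
Proof.
  revert i; induction m; intros i.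
  - destruct i; simpl; field.
  - assert (Hs : seq 1 (S m) = seq 1 m ++ [S m]) by (rewrite seq_S; reflexivity).
    pose proof (INR_fact_neq_0 m). pose proof (INR_S_neq0 m).
    induction i as [|i IHi]; change (fact (S m)) with (S m * fact m)%nat in *; rewrite mult_INR in *;
      apply (Rmult_eq_reg_l (INR (S m))); auto;
      rewrite Hs, invprod_coef_snoc, <- Hs, IHm by (try apply Forall_lt0_seq; lia).
    + cbn [invprod_coef_pred h_sym]. field; auto.
    + cbn [invprod_coef_pred]. rewrite IHi, h_sym_S. field; auto.
Qed.

(* Partial fractions: [1/((k-s)...(k+m-s)) = (1/((k-s)...(k+m-1-s)) - 1/((k+1-s)...(k+m-s))) / m]. *)
Lemma invprod_coef_seq_diff i k m : (0 < k)%nat ->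
  INR m * invprod_coef i (seq k (S m)) = invprod_coef i (seq k m) - invprod_coef i (seq (S k) m).
Proof.
  intros Hk.
  pose proof (invprod_coef_cons i k (seq (S k) m) (INR_neq0 k Hk)) as E1.
  pose proof (invprod_coef_snoc i (seq k m) (k + m) (Forall_lt0_seq k m Hk) ltac:(lia)) as E2.
  rewrite <- seq_S in E2. change (k :: seq (S k) m) with (seq k (S m)) in E1.
  rewrite plus_INR in E2. lra.
Qed.

(* Each coefficient of a factor [1/(r - s)] is at most [1/L] when [r >= L]; counting the
   monomials crudely gives the factor [(i+1)^(length l)]. *)
Lemma invprod_coef_bound i l L : (1 <= L)%nat -> Forall (le L) l ->
  invprod_coef i l * INR L ^ length l <= INR (S i) ^ length l.
Proof.
  intros HL Hl; revert i; induction l as [|x l IH]; intros i.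
  - destruct i; simpl; lra.
  - inversion Hl as [|? ? Hx Hl']; subst. specialize (IH Hl').
    assert (HL1 : 1 <= INR L) by (apply (le_INR 1); auto).
    assert (HxL : INR L <= INR x) by (apply le_INR; auto).
    set (n := length l). cbn [length pow]. fold n in IH.
    assert (HLn : 0 < INR L ^ n) by (apply pow_lt; lra).
    assert (Hdiv : forall c, 0 <= c -> c / INR x * (INR L * INR L ^ n) <= c * INR L ^ n).
    { intros c Hc. replace (c / INR x * (INR L * INR L ^ n)) with (c * INR L ^ n * (INR L / INR x))
        by (field; lra).
      rewrite <- (Rmult_1_r (c * INR L ^ n)) at 2. apply Rmult_le_compat_l; [nra|].
      apply (Rmult_le_reg_r (INR x)); [lra|]. unfold Rdiv; rewrite Rmult_assoc, Rinv_l; lra. }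
    induction i as [|i IHi].
    + change (invprod_coef 0 (x :: l)) with (invprod_coef 0 l / INR x).
      eapply Rle_trans; [apply Hdiv, invprod_coef_nonneg|]. specialize (IH 0%nat).
      replace (INR 1) with 1 in * by reflexivity. rewrite pow1 in *. lra.
    + change (invprod_coef (S i) (x :: l))
        with ((invprod_coef (S i) l + invprod_coef i (x :: l)) / INR x).
      cbn [length pow] in IHi. fold n in IHi. specialize (IH (S i)).
      set (a := INR (S (S i))). set (b := INR (S i)). fold a in IH; fold b in IHi.
      assert (Hab : a = b + 1) by (unfold a, b; apply S_INR).
      assert (Hb : 1 <= b) by (unfold b; apply (le_INR 1); lia).
      pose proof (invprod_coef_nonneg (S i) l). pose proof (invprod_coef_nonneg i (x :: l)).
      assert (Hbn : b ^ n <= a ^ n) by (apply pow_le_mono; lra).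
      eapply Rle_trans; [apply Hdiv; lra|].
      assert (invprod_coef i (x :: l) * INR L ^ n <= invprod_coef i (x :: l) * (INR L * INR L ^ n))
        by (apply Rmult_le_compat_l; nra).
      assert (b * b ^ n <= b * a ^ n) by (apply Rmult_le_compat_l; lra).
      fold n. rewrite Hab in *. lra.
Qed.

Lemma invprod_coef_tail_cv i m : (1 <= m)%nat -> Un_cv (fun K => invprod_coef i (seq (S K) m)) 0.
Proof.
  intros Hm. apply cv_squeeze0 with (w := fun K => INR (S i) ^ m / INR (S K)).
  - intros K. split; [apply invprod_coef_nonneg|].
    pose proof (invprod_coef_bound i (seq (S K) m) (S K) ltac:(lia)) as B. rewrite length_seq in B.
    assert (HK : INR (S K) <= INR (S K) ^ m).
    { rewrite <- (pow_1 (INR (S K))) at 1. apply Rle_pow; [apply (le_INR 1)|]; lia. }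
    pose proof (INR_S_pos K). pose proof (invprod_coef_nonneg i (seq (S K) m)).
    apply (Rmult_le_reg_r (INR (S K))); auto. unfold Rdiv; rewrite Rmult_assoc, Rinv_l by lra.
    rewrite Rmult_1_r. eapply Rle_trans; [|apply B].
    + apply Rmult_le_compat_l; auto.
    + apply Forall_forall; intros x Hx; apply in_seq in Hx; simpl; lia.
  - apply cv_div_INR_S.
Qed.

Lemma invprod_coef_row_cv i m : (1 <= m)%nat ->
  Un_cv (fun K => sumR (fun k => invprod_coef i (seq k (S m))) 1 K) (invprod_coef i (seq 1 m) / INR m).
Proof.
  intros Hm. assert (Hm0 : INR m <> 0) by (apply not_0_INR; lia).
  apply cv_ext with (u := fun K => (invprod_coef i (seq 1 m) - invprod_coef i (seq (S K) m)) / INR m).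
  - intros K. rewrite (sumR_ext _ (fun k =>
      / INR m * (invprod_coef i (seq k m) - invprod_coef i (seq (S k) m)))).
    + rewrite sumR_scal, sumR_telescope. replace (1 + K)%nat with (S K) by lia. field; auto.
    + intros k Hk. rewrite <- invprod_coef_seq_diff by lia. field; auto.
  - replace (invprod_coef i (seq 1 m) / INR m) with ((invprod_coef i (seq 1 m) - 0) * / INR m)
      by (unfold Rdiv; ring).
    apply CV_mult; [apply CV_minus; [apply cv_const|apply invprod_coef_tail_cv; auto]|apply cv_const].
Qed.

Lemma invprod_coef_seq_le i k m : (1 <= k)%nat ->
  invprod_coef i (seq (S k) m) <= invprod_coef i (seq 1 (S m)).
Proof.
  intros Hk. apply Rle_trans with (invprod_coef i (seq 2 m)).
  - induction k as [|k IH]; [lia|]. destruct k; [lra|].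
    pose proof (invprod_coef_seq_diff i (S (S k)) m ltac:(lia)).
    pose proof (invprod_coef_nonneg i (seq (S (S k)) (S m))). pose proof (pos_INR m).
    pose proof (IH ltac:(lia)). nra.
  - pose proof (invprod_coef_cons i 1 (seq 2 m) ltac:(simpl; lra)) as E.
    change (1%nat :: seq 2 m) with (seq 1 (S m)) in E. simpl INR in E. rewrite Rmult_1_l in E.
    rewrite E. enough (0 <= invprod_coef_pred i (seq 1 (S m))) by lra.
    destruct i; [simpl; lra|apply invprod_coef_nonneg].
Qed.

(* Pascal's rule, so that [binomR n k = 0] for [n < k] (unlike [C n k]). *)
Fixpoint binomR (n k : nat) : R :=
  match n, k with
  | _, O => 1
  | O, S _ => 0
  | S n', S k' => binomR n' k' + binomR n' (S k')
  end.

Lemma binomR_0 n : binomR n 0 = 1.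
Proof. destruct n; reflexivity. Qed.

Lemma binomR_gt n k : (n < k)%nat -> binomR n k = 0.
Proof.
  revert k; induction n; intros k Hk; destruct k; try lia; simpl; auto.
  rewrite !IHn by lia; ring.
Qed.

Lemma binomR_diag n : binomR n n = 1.
Proof. induction n; simpl; auto. rewrite IHn, binomR_gt by lia; ring. Qed.

Lemma binomR_1 n : binomR n 1 = INR n.
Proof. induction n; simpl; auto. rewrite IHn, binomR_0. destruct n; simpl; ring. Qed.

Lemma C_binomR n k : (k <= n)%nat -> C n k = binomR n k.
Proof.
  revert k; induction n; intros k Hk.
  - destruct k; [|lia]. unfold C; simpl; field.
  - destruct k.
    { rewrite binomR_0. unfold C. rewrite Nat.sub_0_r. simpl (fact 0). simpl INR at 2.
      field. apply INR_fact_neq_0. }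
    destruct (Nat.eq_dec k n) as [->|Hne].
    + rewrite binomR_diag. unfold C. rewrite Nat.sub_diag. simpl (fact 0). simpl INR at 3.
      field. apply INR_fact_neq_0.
    + rewrite <- pascal by lia. simpl binomR. rewrite !IHn by lia. ring.
Qed.

(** * Column sums of the double series *)

Section ColumnSums.

Variable k : nat.
Hypothesis k_pos : (1 <= k)%nat.

Let k_gt0 : 0 < INR k.
Proof. apply lt_0_INR; lia. Qed.

Definition col_boundary (j i m : nat) : R := rising_coef j m * invprod_coef i (seq (S k) m).

Definition col_sum (j i M : nat) : R :=
  sumR (fun m => rising_coef j (m - 1) * invprod_coef i (seq k (S m))) 1 M.

Definition col_sum_tail (j i M : nat) : R :=
  sumR (fun m => rising_coef j (m - 1) * invprod_coef i (seq (S k) m)) 1 M.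

Definition col_sum_lim (j i : nat) : R := binomR (i + j + 1) (j + 1) / INR k ^ (i + j + 2).

Definition col_sum_tail_lim (j i : nat) : R := binomR (i + j) j / INR k ^ (i + j + 1).

Lemma col_boundary_cv j i : Un_cv (col_boundary j i) 0.
Proof.
  apply cv_squeeze0 with (w := fun m => harmonic (S m) ^ (i + j) / INR (S m));
    [|apply harmonic_pow_div_cv].
  intros m. unfold col_boundary.
  split; [apply Rmult_le_pos; [apply rising_coef_nonneg|apply invprod_coef_nonneg]|].
  apply Rle_trans with (rising_coef j m * invprod_coef i (seq 1 (S m))).
  { apply Rmult_le_compat_l; [apply rising_coef_nonneg|apply invprod_coef_seq_le; auto]. }
  rewrite rising_coef_e_sym, invprod_coef_h_sym.
  change (fact (S m)) with (S m * fact m)%nat. rewrite mult_INR.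
  pose proof (INR_fact_lt_0 m). pose proof (INR_S_pos m).
  replace (INR (fact m) * e_sym j m * (h_sym i (S m) / (INR (S m) * INR (fact m))))
    with (e_sym j m * h_sym i (S m) / INR (S m)) by (field; lra).
  unfold Rdiv; apply Rmult_le_compat_r; [left; apply Rinv_0_lt_compat; auto|].
  rewrite Nat.add_comm, pow_add. apply Rmult_le_compat.
  - apply e_sym_nonneg.
  - apply h_sym_nonneg.
  - eapply Rle_trans; [apply e_sym_le_harmonic_pow|].
    apply pow_le_mono; split; [apply harmonic_nonneg|apply harmonic_le_S].
  - apply h_sym_le_harmonic_pow.
Qed.

Lemma col_sum_rec j i M :
  INR k * col_sum j i M = col_sum_tail j i M + match i with O => 0 | S i' => col_sum j i' M end.
Proof.
  unfold col_sum, col_sum_tail. rewrite <- sumR_scal.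
  rewrite (sumR_ext _ (fun m => rising_coef j (m - 1) * invprod_coef i (seq (S k) m)
                                + rising_coef j (m - 1) * invprod_coef_pred i (seq k (S m)))).
  - rewrite sumR_plus. destruct i; cbn [invprod_coef_pred]; [|reflexivity].
    rewrite sumR_mul0r. ring.
  - intros m _. change (seq k (S m)) with (k :: seq (S k) m).
    rewrite <- Rmult_plus_distr_l, <- invprod_coef_cons by (apply INR_neq0; lia). ring.
Qed.

(* Peeling off the last factor [1/(k+m-s)] and the last factor [(m+t)]. *)
Lemma col_term_tail_rec j i m : (1 <= m)%nat ->
  INR k * (rising_coef j (m - 1) * invprod_coef i (seq (S k) m)) =
  col_boundary j i (m - 1) - col_boundary j i m
  + rising_coef j (m - 1) * invprod_coef_pred i (seq (S k) m)
  + (match j with O => 0 | S j' => rising_coef j' (m - 1) end) * invprod_coef i (seq (S k) m).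
Proof.
  intros Hm. destruct m as [|m]; [lia|]. replace (S m - 1)%nat with m by lia. unfold col_boundary.
  pose proof (invprod_coef_snoc i (seq (S k) m) (S k + m)
                (Forall_lt0_seq (S k) m ltac:(lia)) ltac:(lia)) as E.
  rewrite <- seq_S, plus_INR in E. cbn [rising_coef]. rewrite S_INR in *.
  replace (invprod_coef i (seq (S k) m))
    with ((INR k + (INR m + 1)) * invprod_coef i (seq (S k) (S m))
          - invprod_coef_pred i (seq (S k) (S m)))
    by lra.
  ring.
Qed.

Lemma col_sum_tail_rec j i M :
  INR k * col_sum_tail j i M = col_boundary j i 0 - col_boundary j i M
    + (match i with O => 0 | S i' => col_sum_tail j i' M end
       + match j with O => 0 | S j' => col_sum_tail j' i M end).
Proof.
  unfold col_sum_tail. rewrite <- sumR_scal.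
  rewrite (sumR_ext _ (fun m => (col_boundary j i (m - 1) - col_boundary j i (S m - 1))
     + (rising_coef j (m - 1) * invprod_coef_pred i (seq (S k) m)
        + (match j with O => 0 | S j' => rising_coef j' (m - 1) end) * invprod_coef i (seq (S k) m)))).
  2:{ intros m Hm. rewrite col_term_tail_rec by lia. replace (S m - 1)%nat with m by lia. ring. }
  rewrite !sumR_plus, (sumR_telescope (fun m => col_boundary j i (m - 1))).
  replace (1 + M - 1)%nat with M by lia. change (1 - 1)%nat with 0%nat.
  destruct i, j; cbn [invprod_coef_pred]; rewrite ?sumR_mul0r, ?sumR_mul0l; ring.
Qed.

Lemma cv_of_scaled_rec (u d v : nat -> R) c L :
  (forall M, INR k * u M = c - d M + v M) -> Un_cv d 0 -> Un_cv v L ->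
  Un_cv u ((c + L) / INR k).
Proof.
  intros Hrec Hd Hv. apply cv_ext with (u := fun M => / INR k * (c - d M + v M)).
  { intros M. rewrite <- Hrec. field. lra. }
  replace ((c + L) / INR k) with (/ INR k * (c - 0 + L)) by (field; lra).
  apply cv_scal, CV_plus; auto. apply CV_minus; auto. apply cv_const.
Qed.

Lemma col_sum_tail_lim_rec j i :
  col_sum_tail_lim j i = (col_boundary j i 0
    + (match i with O => 0 | S i' => col_sum_tail_lim j i' end
       + match j with O => 0 | S j' => col_sum_tail_lim j' i end)) / INR k.
Proof.
  unfold col_sum_tail_lim, col_boundary. destruct i, j; cbn [rising_coef seq invprod_coef].
  - simpl. field; repeat split; try apply pow_nonzero; lra.
  - rewrite !Nat.add_0_l, !binomR_diag, !Nat.add_1_r. simpl pow.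
    field; repeat split; try apply pow_nonzero; lra.
  - rewrite !Nat.add_0_r, !binomR_0, !Nat.add_1_r. simpl pow.
    field; repeat split; try apply pow_nonzero; lra.
  - replace (S i + S j)%nat with (S (i + S j)) by lia. replace (S i + j)%nat with (i + S j)%nat by lia.
    cbn [binomR]. rewrite !Nat.add_1_r. simpl pow. field; repeat split; try apply pow_nonzero; lra.
Qed.

Lemma col_sum_lim_rec j i :
  col_sum_lim j i = (col_sum_tail_lim j i + match i with O => 0 | S i' => col_sum_lim j i' end) / INR k.
Proof.
  unfold col_sum_lim, col_sum_tail_lim. destruct i.
  - rewrite !Nat.add_0_l, !binomR_diag.
    replace (j + 2)%nat with (S (S j)) by lia. replace (j + 1)%nat with (S j) by lia.
    simpl pow. field; repeat split; try apply pow_nonzero; lra.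
  - replace (S i + j + 1)%nat with (S (i + j + 1)) by lia.
    replace (j + 1)%nat with (S j) by lia. cbn [binomR].
    replace (i + j + 1)%nat with (S i + j)%nat by lia.
    replace (S i + j + 2)%nat with (S (S (S i + j))) by lia.
    replace (i + j + 2)%nat with (S (S i + j)) by lia. simpl pow.
    field; repeat split; try apply pow_nonzero; lra.
Qed.

Lemma col_sum_tail_cv j i : Un_cv (col_sum_tail j i) (col_sum_tail_lim j i).
Proof.
  revert i; induction j as [|j IHj]; intros i; induction i as [|i IHi];
    rewrite col_sum_tail_lim_rec;
    (eapply (cv_of_scaled_rec _ (col_boundary _ _));
     [apply col_sum_tail_rec|apply col_boundary_cv|apply CV_plus; auto using cv_const]).
Qed.

Lemma col_sum_cv j i : Un_cv (col_sum j i) (col_sum_lim j i).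
Proof.
  induction i as [|i IHi]; rewrite col_sum_lim_rec, <- (Rplus_0_l (col_sum_tail_lim j _ + _));
    (eapply (cv_of_scaled_rec _ (fun _ => 0));
     [intros M; rewrite col_sum_rec, Rminus_0_r, Rplus_0_l; reflexivity|apply cv_const
     |apply CV_plus; auto using col_sum_tail_cv, cv_const]).
Qed.

End ColumnSums.

(** * The series [sum_m e_j(m-1) h_i(m) / m^2] *)

Lemma row_sum_cv j i m : (1 <= m)%nat ->
  Un_cv (fun K => sumR (fun k => rising_coef j (m - 1) * invprod_coef i (seq k (S m))) 1 K)
        (e_sym j (m - 1) * h_sym i m / INR m ^ 2).
Proof.
  intros Hm. destruct m as [|m]; [lia|]. replace (S m - 1)%nat with m by lia.
  eapply cv_ext; [intros K; symmetry; apply sumR_scal|].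
  replace (e_sym j m * h_sym i (S m) / INR (S m) ^ 2)
    with (rising_coef j m * (invprod_coef i (seq 1 (S m)) / INR (S m))).
  - apply cv_scal, invprod_coef_row_cv; lia.
  - rewrite rising_coef_e_sym, invprod_coef_h_sym.
    change (fact (S m)) with (S m * fact m)%nat. rewrite mult_INR.
    pose proof (INR_fact_neq_0 m). pose proof (INR_S_neq0 m). field; auto.
Qed.

Lemma sum_col_sum_lim_cv j i :
  Un_cv (fun K => sumR (fun k => col_sum_lim k j i) 1 K)
        (binomR (i + j + 1) (j + 1) * mzv [(i + j + 2)%nat]).
Proof.
  destruct (zeta_partial_cv (i + j + 2) ltac:(lia)) as [z Hz]. rewrite (mzv_of_cv _ _ Hz).
  apply cv_ext with (u := fun K => binomR (i + j + 1) (j + 1) * mzv_partial [(i + j + 2)%nat] K).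
  - intros K. rewrite mzv_partial_single, <- sumR_scal. apply sumR_ext. intros k _.
    unfold col_sum_lim, Rdiv; ring.
  - apply cv_scal; auto.
Qed.

Lemma sum_e_sym_pred_h_sym_sq_cv i j :
  Un_cv (fun M => sumR (fun m => e_sym j (m - 1) * h_sym i m / INR m ^ 2) 1 M)
        (binomR (i + j + 1) (j + 1) * mzv [(i + j + 2)%nat]).
Proof.
  apply (series_swap (fun m k => rising_coef j (m - 1) * invprod_coef i (seq k (S m))) _
                     (fun k => col_sum_lim k j i)).
  - intros; apply Rmult_le_pos; [apply rising_coef_nonneg|apply invprod_coef_nonneg].
  - apply row_sum_cv.
  - intros k Hk. apply (col_sum_cv k Hk).
  - apply sum_col_sum_lim_cv.
Qed.

(** * Sums of truncated multiple zeta values over all compositions *)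

Lemma compositions_S q W :
  compositions (S q) W = flat_map (fun a => map (cons a) (compositions q (W - a))) (seq 1 W).
Proof. reflexivity. Qed.

Lemma compositions_lt q W : (W < q)%nat -> compositions q W = [].
Proof.
  revert W; induction q; intros W H; [lia|]. rewrite compositions_S.
  assert (Hnil : forall l, (forall a, In a l -> (1 <= a <= W)%nat) ->
            flat_map (fun a => map (cons a) (compositions q (W - a))) l = []).
  { induction l as [|b l IHl]; intros Hl; simpl; auto.
    rewrite IHq by (pose proof (Hl b (or_introl eq_refl)); lia). simpl. apply IHl.
    intros; apply Hl; simpl; auto. }
  apply Hnil. intros a Ha; apply in_seq in Ha; lia.
Qed.

Definition mzv_sum_partial (q W N : nat) : R :=
  Rsum_list (map (fun b => mzv_partial b N) (compositions q W)).

Lemma mzv_sum_partial_lt q W N : (W < q)%nat -> mzv_sum_partial q W N = 0.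
Proof. intros; unfold mzv_sum_partial; rewrite compositions_lt; auto. Qed.

Lemma mzv_sum_partial_0 W N : mzv_sum_partial 0 W N = match W with O => 1 | S _ => 0 end.
Proof. destruct W; [unfold mzv_sum_partial; simpl; unfold Rsum_list; simpl; ring|reflexivity]. Qed.

Lemma mzv_sum_partial_S_0 q W : mzv_sum_partial (S q) W 0 = 0.
Proof.
  unfold mzv_sum_partial. rewrite compositions_S, Rsum_list_flat_map.
  rewrite (Rsum_list_map_ext _ _ (fun _ => 0)); [apply Rsum_list_map_zero|].
  intros a _. rewrite map_map.
  rewrite (Rsum_list_map_ext _ _ (fun _ => 0)); [apply Rsum_list_map_zero|].
  reflexivity.
Qed.

(* Splitting by the first entry [a] and whether the largest index equals [N+1]. *)
Lemma mzv_sum_partial_S q W N :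
  mzv_sum_partial (S q) W (S N) =
  mzv_sum_partial (S q) W N + sumR (fun a => / (INR (S N) ^ a) * mzv_sum_partial q (W - a) N) 1 W.
Proof.
  unfold mzv_sum_partial. rewrite compositions_S, !Rsum_list_flat_map.
  change (Rsum_list (map ?f (seq 1 W))) with (sumR f 1 W). rewrite <- sumR_plus.
  apply sumR_ext. intros a _. rewrite !map_map.
  rewrite (Rsum_list_map_ext _ _ (fun b => mzv_partial (a :: b) N + / INR (S N) ^ a * mzv_partial b N)).
  - rewrite Rsum_list_map_plus, Rsum_list_map_scal. reflexivity.
  - intros; apply mzv_partial_S.
Qed.

Definition binom_mzv_sum (J W Q N : nat) : R := sumR (fun q => binomR q J * mzv_sum_partial q W N) 0 Q.

Lemma binom_mzv_sum_lt J W Q N : (W < J)%nat -> binom_mzv_sum J W Q N = 0.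
Proof.
  intros H. unfold binom_mzv_sum. rewrite (sumR_ext _ (fun _ => 0)); [apply sumR_zero|]. intros q _.
  destruct (le_lt_dec q W); [rewrite binomR_gt by lia|rewrite mzv_sum_partial_lt by lia]; ring.
Qed.

Lemma binom_mzv_sum_S J W Q N :
  binom_mzv_sum J W (S Q) (S N) = binom_mzv_sum J W (S Q) N +
  sumR (fun a => / (INR (S N) ^ a) * (binom_mzv_sum J (W - a) Q N
                 + match J with O => 0 | S J' => binom_mzv_sum J' (W - a) Q N end)) 1 W.
Proof.
  unfold binom_mzv_sum at 1 2. rewrite !(sumR_Sl _ 0 Q), !(sumR_shift _ 0 Q), !mzv_sum_partial_0.
  rewrite (sumR_ext (fun k => binomR (S k) J * mzv_sum_partial (S k) W (S N))
     (fun k => binomR (S k) J * mzv_sum_partial (S k) W N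
               + sumR (fun a => binomR (S k) J * (/ INR (S N) ^ a * mzv_sum_partial k (W - a) N)) 1 W))
    by (intros; rewrite mzv_sum_partial_S, Rmult_plus_distr_l, sumR_scal; auto).
  rewrite sumR_plus, sumR_swap, <- !Rplus_assoc. f_equal.
  apply sumR_ext; intros a _. unfold binom_mzv_sum. destruct J.
  - rewrite Rplus_0_r, <- sumR_scal. apply sumR_ext; intros. rewrite !binomR_0; ring.
  - rewrite <- sumR_plus, <- sumR_scal. apply sumR_ext; intros. simpl binomR. ring.
Qed.

Lemma sum_inv_pow_h_sym_upto I W N : (I <= W)%nat ->
  sumR (fun a => / INR (S N) ^ a * (if (a <=? I)%nat then h_sym (I - a) N else 0)) 1 W
  = h_sym I (S N) - h_sym I N.
Proof.
  intros HIW. replace W with (I + (W - I))%nat by lia.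
  rewrite sumR_zero_tail by (intros a Ha; rewrite (proj2 (Nat.leb_gt a I)) by lia; ring).
  rewrite h_sym_S_expand. rewrite (sumR_ext _ (fun a => / INR (S N) ^ a * h_sym (I - a) N)); [ring|].
  intros a Ha. rewrite (proj2 (Nat.leb_le a I)) by lia. reflexivity.
Qed.

Lemma binom_mzv_sum_e_h N : forall I J Q, (I + J < Q)%nat ->
  binom_mzv_sum J (I + J) Q N = e_sym J N * h_sym I N.
Proof.
  induction N as [|N IHN]; intros I J Q HQ; destruct Q as [|Q]; try lia.
  - unfold binom_mzv_sum. rewrite sumR_Sl, sumR_shift.
    rewrite (sumR_ext _ (fun _ => 0)) by (intros; rewrite mzv_sum_partial_S_0; ring).
    rewrite sumR_zero, mzv_sum_partial_0. destruct J, I; simpl; unfold Rsum_list; simpl; ring.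
  - assert (Hval : forall J' I' a, (I' + J' = I + J)%nat -> (1 <= a <= I + J)%nat ->
              binom_mzv_sum J' (I' + J' - a) Q N
              = e_sym J' N * (if (a <=? I')%nat then h_sym (I' - a) N else 0)).
    { intros J' I' a H1 H2. destruct (a <=? I')%nat eqn:E.
      - apply Nat.leb_le in E. replace (I' + J' - a)%nat with (I' - a + J')%nat by lia.
        rewrite Rmult_comm, IHN by lia. ring.
      - apply Nat.leb_gt in E. rewrite binom_mzv_sum_lt by lia. ring. }
    rewrite binom_mzv_sum_S, IHN by lia. destruct J as [|J].
    + rewrite (sumR_ext _ (fun a => e_sym 0 N * (/ INR (S N) ^ a
                              * (if (a <=? I)%nat then h_sym (I - a) N else 0)))).
      * rewrite sumR_scal, sum_inv_pow_h_sym_upto by lia. simpl e_sym. ring.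
      * intros a Ha. rewrite Hval by lia. ring.
    + rewrite (sumR_ext _ (fun a => e_sym (S J) N * (/ INR (S N) ^ a
                              * (if (a <=? I)%nat then h_sym (I - a) N else 0))
                            + e_sym J N * (/ INR (S N) ^ a
                              * (if (a <=? S I)%nat then h_sym (S I - a) N else 0)))).
      * rewrite sumR_plus, !sumR_scal, !sum_inv_pow_h_sym_upto by lia.
        rewrite h_sym_S, e_sym_S. ring.
      * intros a Ha. rewrite Hval by lia.
        replace (I + S J - a)%nat with (S I + J - a)%nat by lia. rewrite Hval by lia. ring.
Qed.

(** * The series [sum_m e_J(m-1) h_I(m) / m^3] *)

Definition head_ge3 (a : list nat) : bool := match a with a1 :: _ => Nat.leb 3 a1 | [] => false end.

Definition S_T_partial (w p N : nat) : R :=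
  Rsum_list (map (fun a => mzv_partial a N) (filter head_ge3 (compositions p w))).

Definition mzv_sum_head_partial (a1 q V N : nat) : R :=
  Rsum_list (map (fun b => mzv_partial (a1 :: b) N) (compositions q V)).

Lemma mzv_sum_head_partial_eq a1 q V N :
  mzv_sum_head_partial a1 q V N = sumR (fun m => / (INR (S m) ^ a1) * mzv_sum_partial q V m) 0 N.
Proof.
  unfold mzv_sum_head_partial, mzv_sum_partial.
  rewrite (Rsum_list_map_ext _ _ (fun b => sumR (fun m => / (INR (S m) ^ a1) * mzv_partial b m) 0 N)).
  - induction (compositions q V) as [|b l IH]; cbn [map].
    + change (Rsum_list []) with 0. symmetry; apply sumR_mul0r.
    + rewrite Rsum_list_cons, IH, <- sumR_plus. apply sumR_ext. intros m _.
      cbn [map]. rewrite Rsum_list_cons. ring.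
  - intros b _. change (mzv_partial (a1 :: b) N)
      with (sumR (fun n1 => / (INR n1 ^ a1) * mzv_partial b (n1 - 1)) 1 N).
    rewrite sumR_shift. apply sumR_ext. intros. simpl (S k - 1)%nat. rewrite Nat.sub_0_r. reflexivity.
Qed.

Lemma mzv_sum_head_partial_lt a1 q V N : (V < q)%nat -> mzv_sum_head_partial a1 q V N = 0.
Proof. intros; unfold mzv_sum_head_partial; rewrite compositions_lt; auto. Qed.

Lemma Rsum_list_filter_head_ge3 (g : list nat -> R) (L : nat -> list (list nat)) l :
  Rsum_list (map g (filter head_ge3 (flat_map (fun a1 => map (cons a1) (L a1)) l))) =
  Rsum_list (map (fun a1 =>
    if Nat.leb 3 a1 then Rsum_list (map (fun b => g (a1 :: b)) (L a1)) else 0) l).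
Proof.
  induction l as [|a1 l IH]; [reflexivity|].
  cbn [flat_map]. rewrite filter_app, map_app, Rsum_list_app, IH.
  cbn [map]. rewrite Rsum_list_cons. f_equal.
  destruct (Nat.leb 3 a1) eqn:E; induction (L a1) as [|b L' IHL]; try reflexivity;
    cbn [map filter]; unfold head_ge3 at 1; rewrite E; [cbn [map]; rewrite !Rsum_list_cons, IHL|];
    auto.
Qed.

Lemma S_T_partial_by_head W q N :
  S_T_partial (W + 3) (S q) N = sumR (fun c => mzv_sum_head_partial (3 + c) q (W - c) N) 0 (S W).
Proof.
  unfold S_T_partial. rewrite compositions_S, Rsum_list_filter_head_ge3.
  change (Rsum_list (map ?f (seq 1 (W + 3)))) with (sumR f 1 (W + 3)).
  replace (W + 3)%nat with (2 + S W)%nat by lia.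
  rewrite sumR_zero_head by (intros a Ha; rewrite (proj2 (Nat.leb_gt 3 a)) by lia; reflexivity).
  rewrite !sumR_shift. apply sumR_ext. intros c Hc.
  replace (2 + S W - S (S (S c)))%nat with (W - c)%nat by lia. reflexivity.
Qed.

Lemma e_h_cube_expand J I m : e_sym J m * h_sym I (S m) / INR (S m) ^ 3 =
  sumR (fun c => / (INR (S m) ^ (3 + c)) * binom_mzv_sum J (I - c + J) (S (I + J)) m) 0 (S I).
Proof.
  rewrite (sumR_ext _ (fun c => / INR (S m) ^ 3 * e_sym J m * (/ (INR (S m) ^ c) * h_sym (I - c) m))).
  - rewrite sumR_scal, sumR_Sl, h_sym_S_expand, Nat.sub_0_r, pow_O, Rinv_1.
    unfold Rdiv. ring.
  - intros c Hc. rewrite binom_mzv_sum_e_h by lia. rewrite pow_add, Rinv_mult. ring.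
Qed.

Definition binom_head_sum (J I N : nat) : R :=
  sumR (fun c => sumR (fun q =>
    binomR q J * mzv_sum_head_partial (3 + c) q (I + J - c) N) 0 (S (I + J))) 0 (S I).

Lemma sum_e_h_cube_by_head J I N :
  sumR (fun m => e_sym J (m - 1) * h_sym I m / INR m ^ 3) 1 N = binom_head_sum J I N.
Proof.
  unfold binom_head_sum. rewrite sumR_shift.
  rewrite (sumR_ext _ (fun m => sumR (fun c =>
      / (INR (S m) ^ (3 + c)) * binom_mzv_sum J (I - c + J) (S (I + J)) m) 0 (S I)))
    by (intros m _; rewrite <- e_h_cube_expand, Nat.sub_succ, Nat.sub_0_r; reflexivity).
  rewrite sumR_swap. apply sumR_ext. intros c Hc. unfold binom_mzv_sum.
  rewrite (sumR_ext _ (fun m => sumR (fun q =>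
      binomR q J * (/ INR (S m) ^ (3 + c) * mzv_sum_partial q (I - c + J) m)) 0 (S (I + J))))
    by (intros m _; rewrite <- sumR_scal; apply sumR_ext; intros; ring).
  rewrite sumR_swap. apply sumR_ext. intros q _. rewrite sumR_scal, mzv_sum_head_partial_eq.
  replace (I + J - c)%nat with (I - c + J)%nat by lia. reflexivity.
Qed.

(* Heads [3 + c] with [c > I] leave weight [< J] for [q >= J] further entries. *)
Lemma sum_binom_S_T_by_head J I N :
  sumR (fun p => binomR (p - 1) J * S_T_partial (I + J + 3) p N) 1 (S (I + J))
  = binom_head_sum J I N.
Proof.
  unfold binom_head_sum. rewrite sumR_shift.
  rewrite (sumR_ext _ (fun q => sumR (fun c =>
      binomR q J * mzv_sum_head_partial (3 + c) q (I + J - c) N) 0 (S (I + J)))).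
  - rewrite sumR_swap. replace (S (I + J)) with (S I + J)%nat at 1 by lia.
    apply sumR_zero_tail. intros c Hc.
    rewrite (sumR_ext _ (fun _ => 0)), sumR_zero; [reflexivity|]. intros q _.
    destruct (le_lt_dec q (I + J - c)).
    + rewrite binomR_gt by lia. ring.
    + rewrite mzv_sum_head_partial_lt by lia. ring.
  - intros q _. rewrite Nat.sub_succ, Nat.sub_0_r, S_T_partial_by_head, <- sumR_scal. reflexivity.
Qed.

Lemma sum_e_h_cube J I N :
  sumR (fun m => e_sym J (m - 1) * h_sym I m / INR m ^ 3) 1 N =
  sumR (fun p => binomR (p - 1) J * S_T_partial (I + J + 3) p N) 1 (S (I + J)).
Proof. rewrite sum_e_h_cube_by_head, sum_binom_S_T_by_head. reflexivity. Qed.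

(** * Convergence of the sums [S^T] and the theorem *)

Lemma S_T_partial_nonneg w p N : 0 <= S_T_partial w p N.
Proof. apply Rsum_list_nonneg. intros; apply mzv_partial_nonneg. Qed.

Lemma S_T_partial_le_sum_h_cube n p N : (1 <= p <= n)%nat ->
  S_T_partial (n + 2) p N <= sumR (fun m => h_sym (n - 1) m / INR m ^ 3) 1 N.
Proof.
  intros Hp. pose proof (sum_e_h_cube 0 (n - 1) N) as E.
  replace (n - 1 + 0 + 3)%nat with (n + 2)%nat in E by lia.
  replace (S (n - 1 + 0)) with n in E by lia. simpl e_sym in E.
  rewrite (sumR_ext _ (fun m => 1 * h_sym (n - 1) m / INR m ^ 3)) by (intros; lra).
  rewrite E. eapply Rle_trans; [|apply sumR_ge_term with (k := p)].
  - rewrite binomR_0; lra.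
  - intros; rewrite binomR_0, Rmult_1_l; apply S_T_partial_nonneg.
  - lia.
Qed.

Lemma sum_h_cube_le i N :
  sumR (fun m => h_sym i m / INR m ^ 3) 1 N <= binomR (i + 1) 1 * mzv [(i + 2)%nat].
Proof.
  pose proof (sum_e_sym_pred_h_sym_sq_cv i 0) as T. rewrite !Nat.add_0_r in T.
  eapply Rle_trans; [|eapply (sumR_le_lim _ 1 _ N); [|exact T]].
  - apply sumR_le. intros m Hm. simpl e_sym. rewrite Rmult_1_l.
    pose proof (h_sym_nonneg i m). assert (Hm1 : 1 <= INR m) by (apply (le_INR 1); lia).
    unfold Rdiv. apply Rmult_le_compat_l; auto. apply Rinv_le_contravar; [apply pow_lt; lra|].
    cbn [pow]. nra.
  - intros m Hm. apply Rle_mult_inv_pos.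
    + apply Rmult_le_pos; [apply e_sym_nonneg|apply h_sym_nonneg].
    + apply pow_lt, lt_0_INR; lia.
Qed.

(* The nonnegative partial sums of an admissible MZV are bounded by a single zeta value. *)
Lemma mzv_head_ge3_cv n p a : (1 <= p <= n)%nat ->
  In a (filter head_ge3 (compositions p (n + 2))) -> exists l, Un_cv (mzv_partial a) l.
Proof.
  intros Hp Ha.
  destruct (cv_growing_bounded (mzv_partial a) (binomR (n - 1 + 1) 1 * mzv [(n - 1 + 2)%nat]))
    as [l [Hl _]]; [apply mzv_partial_le_S| |eauto].
  intros N. eapply Rle_trans; [|apply sum_h_cube_le].
  eapply Rle_trans; [|apply S_T_partial_le_sum_h_cube, Hp].
  apply (Rsum_list_map_ge_term _ (fun b => mzv_partial b N) a); auto using mzv_partial_nonneg.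
Qed.

Lemma S_T_partial_cv n p : (1 <= p <= n)%nat -> Un_cv (S_T_partial (n + 2) p) (S_T (n + 2) p).
Proof.
  intros Hp. apply cv_Rsum_list. intros a Ha. destruct (mzv_head_ge3_cv n p a Hp Ha) as [l Hl].
  rewrite (mzv_of_cv _ _ Hl). exact Hl.
Qed.

Lemma sum_e_h_cube_cv J I :
  Un_cv (fun N => sumR (fun m => e_sym J (m - 1) * h_sym I m / INR m ^ 3) 1 N)
        (sumR (fun p => binomR (p - 1) J * S_T (I + J + 3) p) 1 (S (I + J))).
Proof.
  eapply cv_ext; [intros N; symmetry; apply sum_e_h_cube|].
  apply cv_sumR. intros p Hp. apply cv_scal.
  replace (I + J + 3)%nat with (S (I + J) + 2)%nat by lia. apply S_T_partial_cv; lia.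
Qed.

Lemma e_sym_S_div_sq j i m : (1 <= m)%nat ->
  e_sym (S j) m * h_sym i m / INR m ^ 2
  = e_sym (S j) (m - 1) * h_sym i m / INR m ^ 2 + e_sym j (m - 1) * h_sym i m / INR m ^ 3.
Proof.
  intros Hm. destruct m as [|m]; [lia|]. replace (S m - 1)%nat with m by lia.
  rewrite e_sym_S. pose proof (INR_S_neq0 m). field; auto.
Qed.

Lemma Rsum_list_binom_S_T j n : (1 <= j <= n)%nat ->
  Rsum_list (map (fun p => C (p - 1) (j - 1) * S_T (n + 2) p) (seq j (n - j + 1)))
  = sumR (fun p => binomR (p - 1) (j - 1) * S_T (n + 2) p) 1 n.
Proof.
  intros Hj. set (f := fun p => binomR (p - 1) (j - 1) * S_T (n + 2) p).
  replace (sumR f 1 n) with (sumR f 1 (j - 1 + (n - j + 1))) by (f_equal; lia).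
  rewrite sumR_zero_head by (intros p Hp; unfold f; rewrite binomR_gt by lia; ring).
  replace (1 + (j - 1))%nat with j by lia. apply sumR_ext.
  intros p Hp. unfold f. rewrite C_binomR by lia. reflexivity.
Qed.

Lemma infinite_sum_of_sumR_cv u l :
  Un_cv (fun N => sumR u 1 N) l -> infinite_sum (fun k => u (S k)) l.
Proof.
  intros H. apply cv_ext with (u := fun K => sumR u 1 (S K)).
  - intros K. rewrite sum_f_R0_sumR, sumR_shift. reflexivity.
  - apply cv_shift, H.
Qed.

Theorem mainTheorem12 (n j : nat) (hn : (1 <= n)%nat) (hj : (j <= n)%nat) :
  infinite_sum
    (fun k => e_sym j (S k) * h_sym (n - j) (S k) / (INR (S k) ^ 2))
    (if Nat.eqb j 0
     then INR (n + 1) * mzv [(n + 2)%nat]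
     else Rsum_list (map (fun p => C (p - 1) (j - 1) * S_T (n + 2) p)
                         (seq j (n - j + 1)))
          + C (n + 1) (j + 1) * mzv [(n + 2)%nat]).
Proof.
  apply (infinite_sum_of_sumR_cv (fun m => e_sym j m * h_sym (n - j) m / INR m ^ 2)).
  destruct j as [|j]; cbn [Nat.eqb].
  - pose proof (sum_e_sym_pred_h_sym_sq_cv n 0) as T.
    rewrite !Nat.add_0_r, binomR_1 in T. rewrite Nat.sub_0_r. exact T.
  - rewrite Rsum_list_binom_S_T, C_binomR, Rplus_comm by lia. set (i := (n - S j)%nat).
    eapply cv_ext; [intros N; rewrite <- sumR_plus; apply sumR_ext; intros m Hm;
                    symmetry; apply e_sym_S_div_sq; lia|].
    apply CV_plus.
    + pose proof (sum_e_sym_pred_h_sym_sq_cv i (S j)) as T.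
      replace (i + S j)%nat with n in T by (unfold i; lia). exact T.
    + pose proof (sum_e_h_cube_cv j i) as T.
      replace (i + j + 3)%nat with (n + 2)%nat in T by (unfold i; lia).
      replace (S (i + j)) with n in T by (unfold i; lia). rewrite Nat.sub_succ, Nat.sub_0_r. exact T.
Qed.
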